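(* Let $(S,V)$ be a complete semiring-semimodule pair, let $n\ge1$, let $\Gamma$ be an alphabet, and let $M\in (S^{n\times n})^{\Gamma^*\times\Gamma^*}$ be a pushdown transition matrix. Then for all $p\in\Gamma$, $$(M^\omega)_p=\sum_{p'\in\Gamma}(A_M)_{p,p'}\,(M^\omega)_{p'}.$$
   Context: A complete semiring-semimodule pair $(S,V)$ (in the sense of Ésik and Kuich, ''Modern Automata Theory'') consists of a complete starsemiring $S$ (arbitrary sums with infinite associativity/commutativity/distributivity laws, star $s^*=\sum_{j\ge0}s^j$) and a complete $S$-semimodule $V$, with infinite products $\prod_{j\ge1}s_j\in V$ of sequences in $S$ satisfying the axioms of that framework. $M\in (S^{n\times n})^{\Gamma^*\times\Gamma^*}$ (a $\Gamma^*\times\Gamma^*$ matrix with $n\times n$ blocks over $S$) is a pushdown transition matrix if (i) for each $p\in\Gamma$ only finitely many blocks $M_{p,\pi}$ are nonzero, and (ii) $M_{\pi_1,\pi_2}=M_{p,\pi}$ if $\pi_1=p\pi'$, $\pi_2=\pi\pi'$ for some $p\in\Gamma$, $\pi,\pi'\in\Gamma^*$, and $0$ otherwise. $M^*=\sum_{m\ge0}M^m$ with blocks $(M^* )_{\pi,\pi'}$. $M^\omega\in (V^n)^{\Gamma^*}$ is given by $((M^\omega)_\pi)_i=\sum_{\pi_1,\pi_2,\ldots\in\Gamma^*}\sum_{j_1,j_2,\ldots\in\{1,\dots,n\}}(M_{\pi,\pi_1})_{i,j_1}(M_{\pi_1,\pi_2})_{j_1,j_2}\cdots$. For $p,p'\in\Gamma$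 the matrix $(A_M)_{p,p'}\in S^{n\times n}$ is $$(A_M)_{p,p'}=\sum_{\substack{\pi=p_1\dots p_k\in\Gamma^+,\ 1\le j\le k\\ p_j=p'}}M_{p,\pi}\,(M^* )_{p_1,\epsilon}\cdots(M^* )_{p_{j-1},\epsilon}.$$ *)

From HB Require Import structures.
From mathcomp Require Import all_boot all_algebra.
Set Implicit Arguments. Unset Strict Implicit. Unset Printing Implicit Defensive.
Import GRing.Theory.
Local Open Scope ring_scope.

Definition complete_sum_axioms (X : nmodType) (csum : forall I : Type, (I -> X) -> X) :=
  [/\
      (forall (I : Type) (a : I -> X), (I -> False) -> csum I a = 0),
      (forall (I : Type) (a : I -> X) (i0 : I), (forall i, i = i0) -> csum I a = a i0),
      (forall (I : Type) (a : I -> X) (j k : I), j <> k ->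
          (forall i, i = j \/ i = k) -> csum I a = a j + a k)
    &
      (forall (I J : Type) (a : I -> X) (f : I -> J),
          csum I a = csum J (fun j => csum {i : I | f i = j} (fun i => a (sval i))))].

Record complete_pair (S : pzSemiRingType) (V : lSemiModType S) := CompletePair {
  ssum : forall I : Type, (I -> S) -> S;
  vsum : forall I : Type, (I -> V) -> V;
  (* infinite product  s_0 s_1 s_2 ...  (indices shifted to start at 0) *)
  iprod : (nat -> S) -> V;
  ssum_ax : complete_sum_axioms ssum;
  ssum_distl : forall (I : Type) (a : I -> S) (c : S),
      ssum (fun i => c * a i) = c * ssum a;
  ssum_distr : forall (I : Type) (a : I -> S) (c : S),
      ssum (fun i => a i * c) = ssum a * c;
  vsum_ax : complete_sum_axioms vsum;
  vsum_scaler : forall (I : Type) (v : I -> V) (s : S),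
      vsum (fun i => s *: v i) = s *: vsum v;
  vsum_scalel : forall (I : Type) (a : I -> S) (v : V),
      vsum (fun i => a i *: v) = ssum a *: v;
  iprod_head : forall s : nat -> S, iprod s = s 0%N *: iprod (fun j => s j.+1);
  iprod_block : forall (s : nat -> S) (m : nat -> nat),
      m 0%N = 0%N -> (forall j, (m j < m j.+1)%N) ->
      iprod s = iprod (fun j => \prod_(m j <= k < m j.+1) s k);
  iprod_sum : forall (I : nat -> Type) (a : forall j, I j -> S),
      iprod (fun j => ssum (a j)) =
      vsum (fun f : (forall j, I j) => iprod (fun j => a j (f j)))
}.

Section PDA.
Variables (S : pzSemiRingType) (V : lSemiModType S) (P : complete_pair V).
Variables (Gamma : finType) (n : nat).

Definition block := 'I_n -> 'I_n -> S.
Definition gmatrix := seq Gamma -> seq Gamma -> block.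

Definition is_pushdown (M : gmatrix) : Prop :=
  (forall p : Gamma, exists l : seq (seq Gamma),
      forall pi, pi \notin l -> forall i j, M [:: p] pi i j = 0) /\
  (forall (pi1 pi2 : seq Gamma) i j,
      M pi1 pi2 i j =
      match pi1 with
      | [::] => 0
      | p :: pi' =>
          if suffix pi' pi2
          then M [:: p] (take (size pi2 - size pi') pi2) i j
          else 0
      end).

Definition bmul (A B : block) : block := fun i k => \sum_(j < n) A i j * B j k.

Definition gmul (A B : gmatrix) : gmatrix := fun pi pi'' i k =>
  ssum P (fun x : seq Gamma * 'I_n => A pi x.1 i x.2 * B x.1 pi'' x.2 k).

Definition gone : gmatrix := fun pi pi' i j =>
  if (pi == pi') && (i == j) then 1 else 0.

Fixpoint gpow (M : gmatrix) (m : nat) : gmatrix :=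
  if m is m'.+1 then gmul (gpow M m') M else gone.

Definition gstar (M : gmatrix) : gmatrix := fun pi pi' i j =>
  ssum P (fun m : nat => gpow M m pi pi' i j).

Definition gomega (M : gmatrix) (pi : seq Gamma) (i : 'I_n) : V :=
  vsum P (fun f : nat -> seq Gamma * 'I_n =>
    iprod P (fun k => if k is k'.+1 then M (f k').1 (f k).1 (f k').2 (f k).2
                      else M pi (f 0%N).1 i (f 0%N).2)).

(* (A_M)_{p,p'} : sum over pi = p_1..p_k in Gamma^+ and positions j with
   p_j = p' (0-based position j below) of
   M_{p,pi} (M^* )_{p_1,eps} ... (M^* )_{p_{j-1},eps} *)
Definition AM (M : gmatrix) (p p' : Gamma) : block := fun i i' =>
  ssum P (fun x : {x : seq Gamma * nat | (x.2 < size x.1)%N /\ nth p' x.1 x.2 = p'} =>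
    foldl bmul (M [:: p] (sval x).1)
          [seq gstar M [:: q] [::] | q <- take (sval x).2 (sval x).1] i i').

End PDA.

From HB Require Import structures.
From mathcomp Require Import all_boot all_algebra.
From Stdlib Require Import ClassicalEpsilon ProofIrrelevance FunctionalExtensionality.
Set Implicit Arguments. Unset Strict Implicit. Unset Printing Implicit Defensive.
Import GRing.Theory.
Local Open Scope ring_scope.

(* A run of M is an infinite path of configurations (stack, state), and
   (M^ω)_π sums the weights of the runs from π.  A run from a stack τσ, τ ≠ ε,
   either stays strictly above σ forever, and is then a run from τ with σ
   appended to every stack, or it leaves at a first time m + 1.  Since a move
   only rewrites the top symbol, it then stands exactly on σ, and its first
   m + 1 moves form a path from τ to ε with σ appended.  Summing over m gives
   (M^ω)_{τσ} = (M^ω)_τ + (M^* )_{τ,ε} (M^ω)_σ.  After its first move a run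
   from p stands on some p_1 ... p_k, and unrolling this identity along
   p_1 ... p_k yields the equation.  Each decomposition is a bijection between
   index sets of complete sums, so only reindexing and the partition axiom are
   needed. *)

Lemma sval_inj (A : Type) (Pr : A -> Prop) (u v : {x | Pr x}) : sval u = sval v -> u = v.
Proof. by case: u v => [x px] [y py] /= exy; subst y; rewrite (proof_irrelevance _ px py). Qed.

Definition asbool (Q : Prop) : bool := if excluded_middle_informative Q then true else false.

Lemma asboolP (Q : Prop) : reflect Q (asbool Q).
Proof. by rewrite /asbool; case: excluded_middle_informative => q; constructor. Qed.

Lemma rcons_take_last (T : Type) (d : T) (t : seq T) m :
  size t = m.+1 -> rcons (take m t) (last d t) = t.
Proof.
case/lastP: t => [//|t z]; rewrite size_rcons => -[<-].
by rewrite last_rcons -[rcons t z]cats1 take_size_cat ?cats1.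
Qed.

Definition first_exit (T : Type) (A : pred T) (m : nat) (f : nat -> T) :=
  (forall k, (k < m)%N -> A (f k)) /\ ~~ A (f m).

Section CompleteSum.

Variables (X : nmodType) (csum : forall I : Type, (I -> X) -> X).
Arguments csum : clear implicits.
Hypothesis csumP : complete_sum_axioms csum.

Lemma csum_empty I (a : I -> X) : (I -> False) -> csum I a = 0.
Proof. by case: csumP => empty _ _ _; apply: empty. Qed.

Lemma csum_unique I (a : I -> X) i0 : (forall i, i = i0) -> csum I a = a i0.
Proof. by case: csumP => _ unique _ _; apply: unique. Qed.

Lemma csum_two I (a : I -> X) j k :
  j <> k -> (forall i, i = j \/ i = k) -> csum I a = a j + a k.
Proof. by case: csumP => _ _ two _; apply: two. Qed.

Lemma csum_partition I J (f : I -> J) (a : I -> X) :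
  csum I a = csum J (fun j => csum {i | f i = j} (fun z => a (sval z))).
Proof. by case: csumP => _ _ _ part; apply: part. Qed.

Lemma eq_csum I (a b : I -> X) : a =1 b -> csum I a = csum I b.
Proof. by move=> /functional_extensionality ->. Qed.

Lemma reindex_csum I J (g : J -> I) (h : I -> J) (a : I -> X) (b : J -> X) :
  cancel g h -> cancel h g -> (forall j, a (g j) = b j) -> csum I a = csum J b.
Proof.
move=> gK hK ab; rewrite (csum_partition g b); apply: eq_csum => i.
rewrite (@csum_unique _ _ (exist _ (h i) (hK i))) /= -?ab ?hK //.
by case=> j e; apply: sval_inj; rewrite /= -e gK.
Qed.

Lemma csum_eq0 I (a : I -> X) : (forall i, a i = 0) -> csum I a = 0.
Proof.
move=> a0; pose e0 (e : Empty_set) : I := match e with end.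
rewrite (eq_csum a0) -[RHS](@csum_empty Empty_set (fun=> 0)); last by case.
rewrite (csum_partition e0); apply: eq_csum => i.
by rewrite csum_empty //; case=> [[]].
Qed.

Lemma csum_split I (Pr : I -> Prop) (a : I -> X) :
  csum I a = csum {i | Pr i} (fun z => a (sval z)) + csum {i | ~ Pr i} (fun z => a (sval z)).
Proof.
rewrite (csum_partition (fun i => asbool (Pr i))) (@csum_two _ _ true false) //; last first.
  by case; auto.
congr (_ + _).
- apply: (reindex_csum (g := fun z => exist _ (sval z) (introT (asboolP _) (proj2_sig z)))
     (h := fun z => exist _ (sval z) (elimT (asboolP _) (proj2_sig z)))) => // z;
  by apply: sval_inj.
- apply: (reindex_csum
     (g := fun z : {i | ~ Pr i} => exist _ (sval z) (introF (asboolP _) (proj2_sig z)))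
     (h := fun z => exist (fun i => ~ Pr i) (sval z) (elimF (asboolP _) (proj2_sig z)))) => // z;
  by apply: sval_inj.
Qed.

Lemma csum_restrict I (Pr : I -> Prop) (a : I -> X) :
  (forall i, ~ Pr i -> a i = 0) -> csum I a = csum {i | Pr i} (fun z => a (sval z)).
Proof.
move=> a0; rewrite (csum_split Pr) [X in _ + X]csum_eq0 ?addr0 //.
by case=> i /= /a0.
Qed.

Lemma csum_single I (a : I -> X) i0 : (forall i, i <> i0 -> a i = 0) -> csum I a = a i0.
Proof.
move=> a0; rewrite (csum_restrict a0).
rewrite (@csum_unique _ _ (exist (fun i => i = i0) i0 erefl)) //.
by case=> i e; apply: sval_inj.
Qed.

Lemma csum_sig_restrict I (P1 P2 : I -> Prop) (a : I -> X) :
  (forall i, P1 i -> ~ P2 i -> a i = 0) ->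
  csum {i | P1 i} (fun z => a (sval z)) = csum {i | P1 i /\ P2 i} (fun z => a (sval z)).
Proof.
move=> a0; rewrite (csum_restrict (Pr := fun z : {i | P1 i} => P2 (sval z))); last first.
  by case=> i p1 /= /(a0 i p1).
have P12 (z : {z : {i | P1 i} | P2 (sval z)}) : P1 (sval (sval z)) /\ P2 (sval (sval z)).
  by case: z => [[i p1] p2].
apply: (reindex_csum (g := fun w : {i | P1 i /\ P2 i} =>
   exist (fun z : {i | P1 i} => P2 (sval z)) (exist _ (sval w) (proj1 (proj2_sig w)))
     (proj2 (proj2_sig w)))
  (h := fun z => exist _ (sval (sval z)) (P12 z))) => // [w|z].
  exact: sval_inj.
by do 2 apply: sval_inj.
Qed.

Lemma csum_option I (a : option I -> X) :
  csum (option I) a = a None + csum I (fun i => a (Some i)).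
Proof.
rewrite (csum_split (fun o => o = None)).
rewrite (@csum_unique _ _ (exist (fun o : option I => o = None) None erefl)); last first.
  by case=> o e; apply: sval_inj.
congr (_ + _).
pose h (z : {o : option I | o <> None}) : I :=
  match z with exist (Some i) _ => i | exist None p => False_rect _ (p erefl) end.
apply: (reindex_csum
  (g := fun i => exist (fun o => o <> None) (Some i) (ltac:(by []) : Some i <> None)) (h := h)).
- by [].
- by case=> [[i|//] p]; apply: sval_inj.
- by [].
Qed.

Lemma csum_ord k (a : 'I_k -> X) : csum 'I_k a = \sum_(i < k) a i.
Proof.
elim: k a => [|k IHk] a; first by rewrite big_ord0 csum_empty //; case.
pose g (o : option 'I_k) := if o is Some i then lift ord0 i else ord0.
rewrite big_ord_recl -IHk (reindex_csum (g := g) (h := unlift ord0) (b := a \o g)) //.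
- by rewrite csum_option.
- by case=> [i|] /=; rewrite ?liftK ?unlift_none.
- by move=> i; case: unliftP.
Qed.

Lemma csum_fin (F : finType) (a : F -> X) : csum F a = \sum_(x : F) a x.
Proof.
rewrite (big_enum_val (A := predT)) /= -csum_ord.
apply: (reindex_csum (g := enum_val) (h := enum_rank)) => //.
- exact: enum_valK.
- exact: enum_rankK.
Qed.

Lemma csum_sig_ltn k (a : nat -> X) :
  csum {j : nat | (j < k)%N} (fun z => a (sval z)) = \sum_(j < k) a j.
Proof.
rewrite -csum_fin.
apply: (reindex_csum (g := fun i : 'I_k => exist (fun j => (j < k)%N) (nat_of_ord i) (ltn_ord i))
   (h := fun z => Ordinal (proj2_sig z))) => // [i|z].
- exact: val_inj.
- by apply: sval_inj.
Qed.

Lemma csum_nat_recl (a : nat -> X) : csum nat a = a 0%N + csum nat (fun k => a k.+1).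
Proof.
pose g (o : option nat) := if o is Some k then k.+1 else 0%N.
rewrite (reindex_csum (g := g) (h := fun k => if k is k'.+1 then Some k' else None) (b := a \o g)).
- by rewrite csum_option.
- by case.
- by case.
- by [].
Qed.

Lemma csum_pair I J (a : I * J -> X) :
  csum (I * J) a = csum I (fun i => csum J (fun j => a (i, j))).
Proof.
rewrite (csum_partition fst); apply: eq_csum => i.
apply: (reindex_csum (g := fun j => exist (fun z : I * J => z.1 = i) (i, j) erefl)
   (h := fun z => (sval z).2)) => //.
by case=> [[i' j]] /= e; subst i'; apply: sval_inj.
Qed.

Lemma exchange_csum I J (a : I -> J -> X) :
  csum I (fun i => csum J (a i)) = csum J (fun j => csum I (fun i => a i j)).
Proof.
rewrite -(csum_pair (fun z => a z.1 z.2)) -(csum_pair (fun z => a z.2 z.1)).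
by apply: (reindex_csum (g := fun z => (z.2, z.1)) (h := fun z => (z.2, z.1))); case.
Qed.

Lemma exchange_csum_big I (F : finType) (a : I -> F -> X) :
  csum I (fun i => \sum_(x : F) a i x) = \sum_(x : F) csum I (fun i => a i x).
Proof.
under eq_csum do rewrite -csum_fin.
by rewrite exchange_csum csum_fin.
Qed.

Lemma csum_sig_pair I J (Pr : I * J -> Prop) (a : {z : I * J | Pr z} -> X) :
  csum {z | Pr z} a =
  csum I (fun i => csum {j | Pr (i, j)} (fun w => a (exist _ (i, sval w) (proj2_sig w)))).
Proof.
rewrite (csum_partition (fun z => (sval z).1)); apply: eq_csum => i.
have Pr_i (z : {z : {z | Pr z} | (sval z).1 = i}) : Pr (i, (sval (sval z)).2).
  by case: z => [[[i' j] pz]] /= e; subst i'.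
apply: (reindex_csum (g := fun w : {j | Pr (i, j)} =>
   exist (fun z : {z | Pr z} => (sval z).1 = i) (exist _ (i, sval w) (proj2_sig w)) erefl)
  (h := fun z => exist _ (sval (sval z)).2 (Pr_i z))) => // [w|].
- by apply: sval_inj.
- by case=> [[[i' j] pz]] /= e; subst i'; do 2 apply: sval_inj.
Qed.

Lemma csum_first_exit T (A : pred T) (a : (nat -> T) -> X) :
  csum {f | ~ forall k, A (f k)} (fun z => a (sval z)) =
  csum nat (fun m => csum {f | first_exit A m f} (fun z => a (sval z))).
Proof.
have exit_ex (f : nat -> T) : ~ (forall k, A (f k)) -> exists k, (fun k => ~~ A (f k)) k.
  by move/not_all_ex_not => [k /negP]; exists k.
have ex_minnE (f : nat -> T) (nA : ~ forall k, A (f k)) m :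
    ex_minn (exit_ex f nA) = m <-> first_exit A m f.
  case: ex_minnP => m0 Am0 m0_min; split => [<-|[Ab Am]].
    by split=> // k ltk; apply/negPn/negP => /m0_min; rewrite leqNgt ltk.
  apply/eqP; rewrite eqn_leq m0_min //= leqNgt; apply/negP => /Ab.
  by rewrite (negbTE Am0).
rewrite (csum_partition (fun z => ex_minn (exit_ex _ (proj2_sig z)))); apply: eq_csum => m.
have exit_m (z : {z : {f | ~ forall k, A (f k)} | ex_minn (exit_ex _ (proj2_sig z)) = m}) :
    first_exit A m (sval (sval z)).
  by apply/(ex_minnE _ (proj2_sig (sval z))); exact: (proj2_sig z).
have not_all f : first_exit A m f -> ~ forall k, A (f k).
  by move=> [_ Am] allA; move: Am; rewrite allA.
have ex_minn_m (w : {f | first_exit A m f}) : ex_minn (exit_ex _ (not_all _ (proj2_sig w))) = m.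
  by apply/ex_minnE; exact: (proj2_sig w).
apply: (reindex_csum
   (g := fun w => exist _ (exist _ (sval w) (not_all _ (proj2_sig w))) (ex_minn_m w))
   (h := fun z => exist _ (sval (sval z)) (exit_m z))) => // [w|z].
- by apply: sval_inj.
- by do 2 apply: sval_inj.
Qed.

End CompleteSum.

Section InfiniteProduct.

Variables (S : pzSemiRingType) (V : lSemiModType S) (P : complete_pair V).

Lemma iprod_prefix m (s : nat -> S) :
  iprod P s = (\prod_(k < m) s k) *: iprod P (fun k => s (m + k)%N).
Proof.
elim: m => [|m IHm]; first by rewrite big_ord0 scale1r.
rewrite IHm (iprod_head P) scalerA big_ord_recr /= addn0.
by do 3 f_equal; apply: functional_extensionality => k; rewrite addnS.
Qed.

Lemma iprod_eq0 (s : nat -> S) k : s k = 0 -> iprod P s = 0.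
Proof. by move=> sk0; rewrite (iprod_prefix k) (iprod_head P) addn0 sk0 scale0r scaler0. Qed.

End InfiniteProduct.

Section Runs.

Variables (S : pzSemiRingType) (V : lSemiModType S) (P : complete_pair V).
Variables (n : nat) (Gamma : finType) (M : gmatrix S Gamma n).

Local Notation SS I a := (@ssum _ _ P I a).
Local Notation VS I a := (@vsum _ _ P I a).
Let ssumP := ssum_ax P.
Let vsumP := vsum_ax P.

Definition config := (seq Gamma * 'I_n)%type.

Definition step (x y : config) : S := M x.1 y.1 x.2 y.2.

Definition scons (x : config) (f : nat -> config) : nat -> config :=
  fun k => if k is k'.+1 then f k' else x.

Definition run_weight (x : config) (f : nat -> config) : V :=
  iprod P (fun k => step (scons x f k) (f k)).

Definition omega (x : config) : V := VS (nat -> config) (run_weight x).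

Fixpoint path_weight (x : config) (t : seq config) : S :=
  if t is y :: t' then step x y * path_weight y t' else 1.

Lemma gomegaE pi i : gomega P M pi i = omega (pi, i).
Proof.
congr (vsum P _); apply: functional_extensionality => f.
by congr (iprod P _); apply: functional_extensionality; case.
Qed.

Lemma path_weight_rcons x t y : path_weight x (rcons t y) = path_weight x t * step (last x t) y.
Proof.
elim: t x => [|z t IHt] x /=; first by rewrite mulr1 mul1r.
by rewrite IHt mulrA.
Qed.

Lemma prod_step_mkseq m x f :
  \prod_(k < m) step (scons x f k) (f k) = path_weight x (mkseq f m).
Proof.
elim: m => [|m IHm]; first by rewrite big_ord0.
rewrite big_ord_recr mkseqS path_weight_rcons -IHm; congr (_ * step _ _).
by case: m {IHm} => // m; rewrite mkseqS last_rcons.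
Qed.

Lemma run_weight_prefix m x f :
  run_weight x f = path_weight x (mkseq f m) *: run_weight (scons x f m) (fun k => f (m + k)%N).
Proof.
rewrite /run_weight (iprod_prefix P m) prod_step_mkseq; congr (_ *: iprod P _).
by apply: functional_extensionality; case=> [|k] /=; rewrite ?addn0 ?addnS.
Qed.

Lemma run_weight_cons x y g : run_weight x (scons y g) = step x y *: run_weight y g.
Proof. exact: iprod_head. Qed.

Lemma omega_unfold x : omega x = VS config (fun y => step x y *: omega y).
Proof.
rewrite /omega (reindex_csum vsumP (g := fun z : config * (nat -> config) => scons z.1 z.2)
   (h := fun f => (f 0%N, fun k => f k.+1)) (b := fun z => step x z.1 *: run_weight z.1 z.2)).
- rewrite (csum_pair vsumP); apply: eq_csum => y /=.
  by rewrite (vsum_scaler P).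
- by case.
- by move=> f; apply: functional_extensionality; case.
- by case=> y g; rewrite run_weight_cons.
Qed.

Lemma gpow_path m pi pi' i j :
  gpow P M m.+1 pi pi' i j =
  SS {t : seq config | size t = m} (fun t => path_weight (pi, i) (rcons (sval t) (pi', j))).
Proof.
elim: m pi' j => [|m IHm] pi' j.
  rewrite /= /gmul (csum_single ssumP (i0 := (pi, i))) /gone /= ?eqxx ?mul1r.
    rewrite (@csum_unique _ _ ssumP _ _ (exist (fun t : seq config => size t = 0%N) [::] erefl)).
      by rewrite /= mulr1.
    by case=> t t0; apply: sval_inj; exact: size0nil.
  case=> rho l /= ne; case: ifP => [/andP [/eqP e1 /eqP e2] | _]; last by rewrite mul0r.
  by case: ne; rewrite e1 e2.
transitivity (SS (config * {t : seq config | size t = m})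
   (fun z => path_weight (pi, i) (rcons (sval z.2) z.1) * step z.1 (pi', j))).
  have -> : gpow P M m.+2 pi pi' i j =
    SS config (fun y => gpow P M m.+1 pi y.1 i y.2 * step y (pi', j)) by [].
  rewrite [RHS](csum_pair ssumP); apply: eq_csum => y.
  by rewrite IHm -(ssum_distr P); case: y.
have take_size (t : {t : seq config | size t = m.+1}) : size (take m (sval t)) = m.
  by case: t => t /= tm; rewrite size_take tm ltnSn.
have rcons_size (z : config * {t : seq config | size t = m}) : size (rcons (sval z.2) z.1) = m.+1.
  by case: z => y [t /= <-]; rewrite size_rcons.
apply: (reindex_csum ssumP (g := fun t => (last (pi, i) (sval t), exist _ _ (take_size t)))
   (h := fun z => exist _ _ (rcons_size z))).
- by case=> t tm; apply: sval_inj => /=; rewrite rcons_take_last.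
- case=> y [t tm] /=; rewrite last_rcons; congr pair; apply: sval_inj => /=.
  by rewrite -cats1 take_size_cat.
- by case=> t tm /=; rewrite [in RHS]path_weight_rcons rcons_take_last.
Qed.

Definition splice (y : config) (s : seq config) (g : nat -> config) : nat -> config :=
  fun k => nth (g (k - (size s).+1)%N) (rcons s y) k.

Lemma splice_lt y s g k : (k < size s)%N -> splice y s g k = nth y s k.
Proof. by move=> lt_ks; rewrite /splice nth_rcons lt_ks (set_nth_default y). Qed.

Lemma splice_size y s g : splice y s g (size s) = y.
Proof. by rewrite /splice nth_rcons ltnn eqxx. Qed.

Lemma splice_addn y s g k : splice y s g ((size s).+1 + k)%N = g k.
Proof. by rewrite /splice nth_default ?size_rcons ?leq_addr // addKn. Qed.

Lemma mkseq_splice y s g : mkseq (splice y s g) (size s) = s.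
Proof.
apply: (@eq_from_nth _ y); rewrite size_mkseq // => k lt_ks.
by rewrite nth_mkseq // splice_lt.
Qed.

Lemma splice_mkseq (f : nat -> config) m :
  splice (f m) (mkseq f m) (fun k => f (m.+1 + k)%N) = f.
Proof.
apply: functional_extensionality => k; rewrite /splice nth_rcons !size_mkseq.
by case: ltngtP => [lt_km|lt_mk|->]; rewrite ?nth_mkseq ?subnKC.
Qed.

Lemma run_weight_splice x y s g :
  run_weight x (splice y s g) = path_weight x (rcons s y) *: run_weight y g.
Proof.
rewrite (run_weight_prefix (size s).+1) mkseqS mkseq_splice /= splice_size.
by congr (_ *: run_weight _ _); apply: functional_extensionality => k; rewrite splice_addn.
Qed.

Definition exit_path (A : pred config) m (w : config * seq config) :=
  [/\ size w.2 = m, all A w.2 & ~~ A w.1].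

Lemma vsum_exit_at (A : pred config) m x :
  VS {f | first_exit A m f} (fun z => run_weight x (sval z)) =
  VS {w | exit_path A m w}
     (fun w => path_weight x (rcons (sval w).2 (sval w).1) *: omega (sval w).1).
Proof.
transitivity (VS ({w | exit_path A m w} * (nat -> config))
    (fun z => path_weight x (rcons (sval z.1).2 (sval z.1).1) *: run_weight (sval z.1).1 z.2)).
  have spliceP (z : {w | exit_path A m w} * (nat -> config)) :
      first_exit A m (splice (sval z.1).1 (sval z.1).2 z.2).
    case: z => [[[y s] [/= sm As Ay]] g] /=; split; last by rewrite -sm splice_size.
    move=> k lt_km; rewrite splice_lt ?sm //.
    by apply: (allP As); apply: mem_nth; rewrite sm.
  have cutP (z : {f | first_exit A m f}) : exit_path A m (sval z m, mkseq (sval z) m).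
    case: z => f [Af Afm] /=; split => //; first by rewrite size_mkseq.
    apply/allP => y /mapP [k]; rewrite mem_iota add0n => /andP [_ lt_km] ->.
    exact: Af.
  apply: (reindex_csum vsumP (g := fun z => exist _ _ (spliceP z))
     (h := fun z => (exist _ _ (cutP z), fun k => sval z (m.+1 + k)%N))).
  - case=> [[[y s] [/= sm As Ay]] g]; congr pair.
      by apply: sval_inj => /=; rewrite -sm splice_size mkseq_splice.
    by apply: functional_extensionality => k /=; rewrite -sm splice_addn.
  - by case=> f fP; apply: sval_inj => /=; rewrite splice_mkseq.
  - by case=> [[[y s] wP] g] /=; rewrite run_weight_splice.
rewrite (csum_pair vsumP); apply: eq_csum => w /=.
by rewrite (vsum_scaler P).
Qed.

End Runs.

Section Pushdown.

Variables (S : pzSemiRingType) (V : lSemiModType S) (P : complete_pair V).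
Variables (n : nat) (Gamma : finType) (M : gmatrix S Gamma n).
Hypothesis M_pushdown : forall (pi1 pi2 : seq Gamma) i j,
  M pi1 pi2 i j =
  match pi1 with
  | [::] => 0
  | p :: pi' => if suffix pi' pi2 then M [:: p] (take (size pi2 - size pi') pi2) i j else 0
  end.

Local Notation SS I a := (@ssum _ _ P I a).
Local Notation VS I a := (@vsum _ _ P I a).
Let ssumP := ssum_ax P.
Let vsumP := vsum_ax P.
Local Notation config := (config n Gamma).
Local Notation step := (step M).
Local Notation run_weight := (run_weight P M).
Local Notation omega := (omega P M).
Local Notation path_weight := (path_weight M).

Lemma M_nil pi i j : M [::] pi i j = 0.
Proof. by rewrite M_pushdown. Qed.

Lemma M_cat tau tau' sigma i j :
  tau != [::] -> M (tau ++ sigma) (tau' ++ sigma) i j = M tau tau' i j.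
Proof.
case: tau => [//|q t] _.
rewrite /= M_pushdown [RHS]M_pushdown suffix_catl // eqxx /=.
case: (suffix t tau') => //.
by rewrite !size_cat subnDr takel_cat // leq_subr.
Qed.

Definition above (sigma rho : seq Gamma) : bool := (size sigma < size rho)%N && suffix sigma rho.

Definition strip (sigma rho : seq Gamma) : seq Gamma := take (size rho - size sigma) rho.

Lemma strip_cat tau sigma : strip sigma (tau ++ sigma) = tau.
Proof. by rewrite /strip size_cat addnK take_size_cat. Qed.

Lemma above_strip sigma rho :
  above sigma rho -> strip sigma rho ++ sigma = rho /\ strip sigma rho != [::].
Proof.
case/andP=> lt_sr /suffixP [tau rE]; subst rho; rewrite strip_cat; split => //.
by apply: contraL lt_sr => /eqP ->; rewrite ltnn.
Qed.

Lemma above_cat tau sigma : tau != [::] -> above sigma (tau ++ sigma).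
Proof.
move=> tau0; rewrite /above size_cat suffix_suffix andbT -{1}(add0n (size sigma)) ltn_add2r.
by rewrite lt0n size_eq0.
Qed.

Lemma M_exit tau sigma rho i j :
  tau != [::] -> ~~ above sigma rho -> rho <> sigma -> M (tau ++ sigma) rho i j = 0.
Proof.
case: tau => [//|q t] _ not_above rho_sigma; rewrite /= M_pushdown.
case st: (suffix (t ++ sigma) rho) => //; move/suffixP: st => [r rE].
have rt0 : r ++ t = [::].
  by apply/eqP; move: not_above; apply: contraNT => rt0; rewrite rE catA above_cat.
by case: rho_sigma; rewrite rE catA rt0.
Qed.

Definition lift_config (sigma : seq Gamma) (y : config) : config := (y.1 ++ sigma, y.2).

Definition unlift_config (sigma : seq Gamma) (y : config) : config := (strip sigma y.1, y.2).

Lemma run_weight_nil x f k : (scons x f k).1 = [::] -> run_weight x f = 0.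
Proof. by move=> fk0; apply: (@iprod_eq0 _ _ P _ k); rewrite /step fk0 M_nil. Qed.

Lemma omega_nil l : omega ([::], l) = 0.
Proof. by apply: csum_eq0 => // f; apply: (run_weight_nil (k := 0)). Qed.

Lemma path_weight_nil x t y z : y \in t -> y.1 = [::] -> path_weight x (rcons t z) = 0.
Proof.
elim: t x => [//|y' t IHt] x /=; rewrite in_cons => /orP [/eqP <- y0 | yt y0].
  by case: t {IHt} => [|? ?] /=; rewrite /step y0 M_nil mul0r mulr0.
by rewrite (IHt _ yt y0) mulr0.
Qed.

Lemma run_weight_lift tau sigma i g : tau != [::] -> (forall k, (g k).1 != [::]) ->
  run_weight (tau ++ sigma, i) (lift_config sigma \o g) = run_weight (tau, i) g.
Proof.
move=> tau0 g0; congr (iprod P _); apply: functional_extensionality => k.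
have nonempty : (scons (tau, i) g k).1 != [::] by case: k.
have liftE : scons (tau ++ sigma, i) (lift_config sigma \o g) k =
    lift_config sigma (scons (tau, i) g k) by case: k {nonempty}.
by rewrite liftE /step /= M_cat.
Qed.

Lemma path_weight_lift sigma x t : all (fun y : config => y.1 != [::]) (belast x t) ->
  path_weight (lift_config sigma x) (map (lift_config sigma) t) = path_weight x t.
Proof.
elim: t x => [|y t IHt] x //= /andP [x0 t0].
by rewrite IHt //; congr (_ * _); apply: M_cat.
Qed.

Lemma vsum_above tau sigma i : tau != [::] ->
  VS {f | forall k, above sigma (f k).1} (fun z => run_weight (tau ++ sigma, i) (sval z)) =
  omega (tau, i).
Proof.
move=> tau0; rewrite /omega.
pose nonempty (g : nat -> config) := forall k, (g k).1 != [::].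
rewrite (csum_restrict vsumP (Pr := nonempty)); last first.
  move=> g /not_all_ex_not [k /negP /negbNE /eqP gk0].
  exact: (run_weight_nil (k := k.+1)).
have lift_above (w : {g | nonempty g}) k :
    above sigma ((lift_config sigma \o sval w) k).1.
  exact: above_cat (proj2_sig w k).
have unlift_ne (z : {f : nat -> config | forall k, above sigma (f k).1}) k :
    ((unlift_config sigma \o sval z) k).1 != [::].
  by case: (above_strip (proj2_sig z k)).
apply: (reindex_csum vsumP (g := fun w => exist _ _ (lift_above w))
   (h := fun z => exist nonempty _ (unlift_ne z))).
- case=> g g0; apply: sval_inj; apply: functional_extensionality => k /=.
  by rewrite /unlift_config /lift_config /= strip_cat; case: (g k).
- case=> f fA; apply: sval_inj; apply: functional_extensionality => k /=.
  by rewrite /unlift_config /lift_config /=; case: (above_strip (fA k)) => -> _; case: (f k).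
- by case=> g g0 /=; apply: run_weight_lift.
Qed.

Lemma ssum_exit_paths tau sigma m i j : tau != [::] ->
  SS {s | exit_path (fun y : config => above sigma y.1) m ((sigma, j), s)}
     (fun s => path_weight (tau ++ sigma, i) (rcons (sval s) (sigma, j))) =
  gpow P M m.+1 tau [::] i j.
Proof.
move=> tau0; pose nonempty (t : seq config) := all (fun y : config => y.1 != [::]) t.
rewrite gpow_path (csum_sig_restrict ssumP (P2 := nonempty)
  (a := fun t => path_weight (tau, i) (rcons t ([::], j)))); last first.
  move=> t _ /negP; rewrite -has_predC => /hasP [y yt /negPn /eqP y0].
  exact: path_weight_nil yt y0.
have lift_exit (t : {t : seq config | size t = m /\ nonempty t}) :
    exit_path (fun y : config => above sigma y.1) m ((sigma, j), map (lift_config sigma) (sval t)).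
  case: t => t [tm t0]; split; rewrite /= ?size_map ?all_map //; last by rewrite /above ltnn.
  by apply/allP => y yt /=; apply: above_cat (allP t0 y yt).
have unlift_ne (s : {s | exit_path (fun y : config => above sigma y.1) m ((sigma, j), s)}) :
    size (map (unlift_config sigma) (sval s)) = m /\ nonempty (map (unlift_config sigma) (sval s)).
  case: s => s [/= sm sA _]; split; rewrite ?size_map // /nonempty all_map.
  by apply/allP => y ys /=; case: (above_strip (allP sA y ys)).
pose above_exit s := exit_path (fun y : config => above sigma y.1) m ((sigma, j), s).
apply: (reindex_csum ssumP (g := fun t => exist above_exit _ (lift_exit t))
   (h := fun s => exist (fun t => size t = m /\ nonempty t) _ (unlift_ne s))).
- case=> t tP; apply: sval_inj => /=; rewrite -map_comp map_id_in // => y _ /=.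
  by rewrite /unlift_config /lift_config /= strip_cat; case: y.
- case=> s [/= sm sA s_low]; apply: sval_inj => /=; rewrite -map_comp map_id_in // => y ys /=.
  rewrite /unlift_config /lift_config /=.
  by case: (above_strip (allP sA y ys)) => -> _; case: y {ys}.
- case=> t [tm t0] /=.
  rewrite -[(sigma, j)]/(lift_config sigma ([::], j)) -map_rcons.
  rewrite -[(tau ++ sigma, i)]/(lift_config sigma (tau, i)) path_weight_lift //.
  by rewrite belast_rcons /= tau0.
Qed.

Lemma vsum_exit_above tau sigma m i : tau != [::] ->
  VS {w | exit_path (fun y : config => above sigma y.1) m w}
     (fun w => path_weight (tau ++ sigma, i) (rcons (sval w).2 (sval w).1) *: omega (sval w).1) =
  \sum_(j < n) gpow P M m.+1 tau [::] i j *: omega (sigma, j).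
Proof.
move=> tau0.
rewrite (csum_sig_pair vsumP) (csum_pair vsumP) (csum_single vsumP (i0 := sigma)); last first.
  move=> rho rho_sigma; apply: csum_eq0 => // j; apply: csum_eq0 => // -[s [/= sm sA rho_low]] /=.
  rewrite path_weight_rcons.
  have : last (tau ++ sigma, i) s \in (tau ++ sigma, i) :: s by apply: mem_last.
  rewrite in_cons => /orP [/eqP -> | ys]; first by rewrite /step /= M_exit // mulr0 scale0r.
  case: (above_strip (allP sA _ ys)) => sE s0.
  by rewrite /step -sE M_exit // mulr0 scale0r.
rewrite (csum_fin vsumP); apply: eq_bigr => j _.
by rewrite /= (vsum_scalel P) ssum_exit_paths.
Qed.

Lemma omega_cat tau sigma i : tau != [::] ->
  omega (tau ++ sigma, i) =
  omega (tau, i) + \sum_(j < n) gstar P M tau [::] i j *: omega (sigma, j).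
Proof.
move=> tau0; rewrite {1}/omega.
rewrite (csum_split vsumP (fun f : nat -> config => forall k, above sigma (f k).1)) vsum_above //.
congr (_ + _); rewrite (csum_first_exit vsumP (fun y : config => above sigma y.1)).
transitivity (VS nat (fun m => \sum_(j < n) gpow P M m.+1 tau [::] i j *: omega (sigma, j))).
  by apply: eq_csum => m; rewrite vsum_exit_at vsum_exit_above.
rewrite (exchange_csum_big vsumP); apply: eq_bigr => j _.
rewrite (vsum_scalel P) /gstar [in RHS](csum_nat_recl ssumP).
by rewrite [gpow _ _ 0 _ _ _ _]/= /gone (negbTE tau0) add0r.
Qed.

Definition drain (B : block S n) (pi : seq Gamma) (j : nat) : block S n :=
  foldl (@bmul S n) B [seq gstar P M [:: q] [::] | q <- take j pi].

Lemma sum_omega_drain d pi (B : block S n) i :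
  \sum_(l < n) B i l *: omega (pi, l) =
  \sum_(j < size pi) \sum_(l < n) drain B pi j i l *: omega ([:: nth d pi j], l).
Proof.
elim: pi B => [|q sigma IHsigma] B.
  by rewrite big_ord0 big1 // => l _; rewrite omega_nil scaler0.
under eq_bigr do rewrite (@omega_cat [:: q] sigma) // scalerDr.
rewrite big_split /= big_ord_recl /=; congr (_ + _).
rewrite -IHsigma; under eq_bigr do rewrite scaler_sumr.
rewrite exchange_big; apply: eq_bigr => j _.
by rewrite /bmul scaler_suml; apply: eq_bigr => l _; rewrite scalerA.
Qed.

Lemma omega_singleton p i :
  omega ([:: p], i) = \sum_(p' : Gamma) \sum_(j < n) AM P M p p' i j *: omega ([:: p'], j).
Proof.
pose F (x : seq Gamma * nat) :=
  \sum_(l < n) drain (M [:: p] x.1) x.1 x.2 i l *: omega ([:: nth p x.1 x.2], l).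
transitivity (VS {x : seq Gamma * nat | (x.2 < size x.1)%N} (fun x => F (sval x))).
  rewrite omega_unfold (csum_pair vsumP) (csum_sig_pair vsumP); apply: eq_csum => pi /=.
  rewrite (csum_fin vsumP) /step /= (sum_omega_drain p).
  by rewrite (csum_sig_ltn vsumP _ (fun j => F (pi, j))).
pose occurs (z : Gamma * (seq Gamma * nat)) :=
  (z.2.2 < size z.2.1)%N /\ nth z.1 z.2.1 z.2.2 = z.1.
pose G (z : Gamma * (seq Gamma * nat)) :=
  \sum_(l < n) drain (M [:: p] z.2.1) z.2.1 z.2.2 i l *: omega ([:: z.1], l).
transitivity (VS {z | occurs z} (fun z => G (sval z))); last first.
  rewrite (csum_sig_pair vsumP) (csum_fin vsumP); apply: eq_bigr => p' _ /=.
  rewrite (exchange_csum_big vsumP); apply: eq_bigr => j _.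
  by rewrite /AM -(vsum_scalel P).
have occurs_nth (x : {x : seq Gamma * nat | (x.2 < size x.1)%N}) :
    occurs (nth p (sval x).1 (sval x).2, sval x).
  by case: x => [[pi j] lt_j] /=; split => //; apply: set_nth_default.
have lt_size (z : {z | occurs z}) : ((sval z).2.2 < size (sval z).2.1)%N by case: z => z [].
symmetry; apply: (reindex_csum vsumP (g := fun x => exist occurs _ (occurs_nth x))
   (h := fun z => exist (fun x : seq Gamma * nat => (x.2 < size x.1)%N) _ (lt_size z))).
- by case=> x lt_x; apply: sval_inj.
- case=> [[p' [pi j]] [/= lt_j nthE]]; apply: sval_inj => /=; congr pair.
  by rewrite -[RHS]nthE; apply: set_nth_default.
- by [].
Qed.

End Pushdown.

Theorem theorem4 (S : pzSemiRingType) (V : lSemiModType S) (P : complete_pair V)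
    (n : nat) (Gamma : finType) (M : gmatrix S Gamma n) :
  (1 <= n)%N -> is_pushdown M ->
  forall (p : Gamma) (i : 'I_n),
    gomega P M [:: p] i =
    \sum_(p' : Gamma) \sum_(j < n) AM P M p p' i j *: gomega P M [:: p'] j.
Proof.
move=> _ [_ M_pushdown] p i.
rewrite gomegaE (omega_singleton P M_pushdown).
by apply: eq_bigr => p' _; apply: eq_bigr => j _; rewrite gomegaE.
Qed.
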